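(* Let $H=(V,E)$ be a hypergraph all of whose edges have size at most $d$. Then there exists a non-adaptive generalized group testing solution for $H$ of size $O(d\log|E|)$.
   Context: A set $T\subseteq V$ (a ''test'') separates two sets $A,B\subseteq V$ if exactly one of $A\cap T$, $B\cap T$ is empty. A non-adaptive generalized group testing solution for a hypergraph $H=(V,E)$ is a family $\mathcal{T}$ of subsets of $V$ such that for every two distinct $A,B\in E$ some $T\in\mathcal{T}$ separates $A$ and $B$. The $O(\cdot)$ hides an absolute constant. *)

From mathcomp Require Import all_boot.
Set Implicit Arguments. Unset Strict Implicit. Unset Printing Implicit Defensive.

Definition separates (V : finType) (T A B : {set V}) : bool :=
  (A :&: T == set0) != (B :&: T == set0).

Definition gt_solution (V : finType) (E Tf : {set {set V}}) : Prop :=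
  forall A B, A \in E -> B \in E -> A != B ->
    exists2 T, T \in Tf & separates T A B.

From mathcomp Require Import all_boot zify.
Set Implicit Arguments. Unset Strict Implicit.

(* Put each vertex into a test independently with probability 1/(2d+1); here
   the test is the zero set of a uniform f : V -> 'I_(2d+1), and probabilities
   are replaced by counts of such f.  If x \in A :\: B and #|B| <= d, the test
   separates A and B as soon as it contains x and misses B, which happens with
   probability at least (1/(2d+1)) (1 - 1/(2d+1))^d >= 1/(4d+2).  So every set
   of pairs of distinct edges has a test separating a 1/(4d+2) fraction of it,
   and greedily picking such tests leaves at most (1 - 1/(4d+2))^t |E|^2 pairs
   unseparated after t steps, which is < 1 for t = (4d+2)(2 log|E| + 1). *)

Lemma bernoulli_sub a b : (a.+1 - b) * a.+1 ^ b <= a.+1 * a ^ b.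
Proof.
elim: b => [|b IH]; first by rewrite subn0 !expn0.
rewrite !expnS; have [b_lt | b_ge] := ltnP b a.+1; last first.
  by have -> : a.+1 - b.+1 = 0 by lia.
rewrite (_ : a.+1 - b = (a.+1 - b.+1).+1) in IH; last by lia.
move: IH; set X := a ^ b; set Y := a.+1 ^ b; nia.
Qed.

Lemma bernoulli_add a k : a ^ k.+1 + k.+1 * a ^ k <= a.+1 ^ k.+1.
Proof.
elim: k => [|k IH]; first by rewrite !expn1 expn0; lia.
move: IH; rewrite (expnS a k.+1) (expnS a.+1 k.+1) (expnS a k).
set X := a ^ k; set Y := a.+1 ^ k.+1; nia.
Qed.

Lemma succ_expn_le_double a b : b <= a -> (2 * a).+1 ^ b <= 2 * (2 * a) ^ b.
Proof.
move=> b_le; have := bernoulli_sub (2 * a) b.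
set X := (2 * a) ^ b; set Y := (2 * a).+1 ^ b => le_XY.
by rewrite -(leq_pmul2l (ltn0Sn (2 * a))); nia.
Qed.

Lemma expn_decay K k : 2 ^ k * K ^ (K.+1 * k) <= K.+1 ^ (K.+1 * k).
Proof.
case: k => [|k]; first by rewrite !muln0.
have half : 2 * K ^ K.+1 <= K.+1 ^ K.+1.
  by have := bernoulli_add K K; rewrite (expnS K K); nia.
by rewrite !expnM -expnMn leq_exp2r.
Qed.

Section GreedyCover.

Variables (I U : finType) (sep : U -> I -> bool) (K : nat) (R : {set I}).

Hypothesis good_test : forall S : {set I}, S \subset R ->
  exists u, #|S| <= K.+1 * #|[set i in S | sep u i]|.

Definition uncovered (Tf : {set U}) :=
  [set i in R | [forall u in Tf, ~~ sep u i]].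

Lemma uncoveredU1 u Tf :
  uncovered (u |: Tf) = [set i in uncovered Tf | ~~ sep u i].
Proof.
apply/setP => i; rewrite !inE -andbA; congr (_ && _).
apply/forallP/andP => [all_Tf | [/forallP all_Tf not_u] v].
  split; last by have := all_Tf u; rewrite !inE eqxx.
  apply/forallP => v; apply/implyP => vTf.
  by have := all_Tf v; rewrite !inE vTf orbT.
rewrite !inE; apply/implyP => /orP [/eqP -> // | vTf].
exact: (implyP (all_Tf v)).
Qed.

Lemma card_uncovered_greedy t : exists Tf : {set U},
  #|Tf| <= t /\ K.+1 ^ t * #|uncovered Tf| <= K ^ t * #|R|.
Proof.
elim: t => [|t [Tf [card_Tf decay]]].
  exists set0; rewrite cards0 !expn0 !mul1n; split=> //.
  by apply/subset_leq_card/subsetP => i; rewrite inE => /andP [].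
have [u good_u] : exists u,
    #|uncovered Tf| <= K.+1 * #|[set i in uncovered Tf | sep u i]|.
  by apply: good_test; apply/subsetP => i; rewrite inE => /andP [].
exists (u |: Tf); split; first by rewrite cardsU1; lia.
have split_card : #|[set i in uncovered Tf | sep u i]| + #|uncovered (u |: Tf)|
    = #|uncovered Tf|.
  rewrite uncoveredU1 -[RHS](cardsID [set i | sep u i]).
  by congr (_ + _); apply: eq_card => i; rewrite !inE andbC.
have one_step : K.+1 * #|uncovered (u |: Tf)| <= K * #|uncovered Tf| by nia.
rewrite !expnS; apply: (@leq_trans (K.+1 ^ t * (K * #|uncovered Tf|))).
  by rewrite -mulnA mulnCA leq_mul2l one_step orbT.
by rewrite mulnCA -mulnA leq_mul2l decay orbT.
Qed.

Lemma greedy_cover k : #|R| < 2 ^ k -> exists Tf : {set U},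
  #|Tf| <= K.+1 * k /\ forall i, i \in R -> exists2 u, u \in Tf & sep u i.
Proof.
move=> R_small; set t := K.+1 * k.
have [Tf [card_Tf decay]] := card_uncovered_greedy t.
exists Tf; split=> // i iR.
have few : #|uncovered Tf| * 2 ^ k <= #|R|.
  rewrite -(leq_pmul2l (expn_gt0 K.+1 t)).
  apply: (@leq_trans (K ^ t * #|R| * 2 ^ k)).
    by rewrite mulnA leq_mul2r decay orbT.
  by rewrite mulnAC (mulnC (K ^ t)) leq_mul2r expn_decay orbT.
have /cards0_eq/setP/(_ i) : #|uncovered Tf| = 0 by nia.
rewrite !inE iR /= => /negbT; rewrite negb_forall => /existsP [u].
by rewrite negb_imply negbK => /andP [uTf sep_u]; exists u.
Qed.

End GreedyCover.

Lemma exchange_sum_card (I J : finType) (S : {set I}) (r : I -> J -> bool) :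
  \sum_j #|[set i in S | r i j]| = \sum_(i in S) #|[set j | r i j]|.
Proof.
under eq_bigr do rewrite -sum1dep_card.
under [RHS]eq_bigr do rewrite -sum1dep_card.
by rewrite [RHS](exchange_big_dep predT).
Qed.

Lemma exists_ge_average (J : finType) (s : J -> nat) c :
  0 < #|J| -> c * #|J| <= \sum_j s j -> exists j, c <= s j.
Proof.
move=> J_gt0 le_sum.
have [/existsP [j le_cj] | ] := boolP [exists j, c <= s j]; first by exists j.
rewrite negb_exists => /forallP small.
have : \sum_j (s j + 1) <= \sum_(j : J) c.
  by apply: leq_sum => j _; rewrite addn1 ltnNge small.
by rewrite big_split /= sum1_card sum_nat_const -[#|xpredT|]/#|J|; lia.
Qed.

Section RandomTests.

Variables (V : finType) (d : nat).

Definition zero_set (f : {ffun V -> 'I_(2 * d).+1}) : {set V} :=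
  [set x | f x == ord0].

Lemma card_separating_tests (A B : {set V}) x :
    x \in A -> x \notin B -> #|B| <= d ->
  (2 * d).+1 ^ #|V| <= (4 * d).+2 * #|[set f | separates (zero_set f) A B]|.
Proof.
move=> xA xB card_B; set n := (2 * d).+1.
pose F y : pred 'I_n :=
  if y == x then pred1 ord0 else if y \in B then predC1 ord0 else predT.
have F_sep : [set f : {ffun V -> 'I_n} | f \in family F]
    \subset [set f | separates (zero_set f) A B].
  apply/subsetP => f; rewrite !inE => /familyP fF.
  have /eqP fx0 : f x == ord0 by have := fF x; rewrite /F eqxx.
  rewrite /separates; have -> : (A :&: zero_set f == set0) = false.
    by apply/negbTE/set0Pn; exists x; rewrite !inE xA fx0.
  suff -> : B :&: zero_set f = set0 by rewrite eqxx.
  apply/setP => y; rewrite !inE; case yB: (y \in B) => //=.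
  have := fF y; rewrite /F yB; case: eqP => [y_x | _].
    by rewrite -y_x yB in xB.
  by rewrite inE => /negbTE.
apply: leq_trans (leq_mul (leqnn _) (subset_leq_card F_sep)).
(* #|family F| = (2d)^#|B| * (2d+1)^(#|V| - #|B| - 1) *)
rewrite cardsE card_family foldrE big_map big_enum /=.
rewrite -[n ^ #|V|]prod_nat_const (bigD1 x) // [in X in _ <= _ * X](bigD1 x) //=.
rewrite (bigID (mem B)) [in X in _ <= _ * X](bigID (mem B)) /=.
rewrite /F eqxx card1 mul1n.
rewrite [X in _ <= _ * (X * _)](eq_bigr (fun _ => 2 * d)); last first.
  by move=> y /andP [/negbTE -> ->]; rewrite cardC1 card_ord.
rewrite [X in _ <= _ * (_ * X)](eq_bigr (fun _ => n)); last first.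
  by move=> y /andP [/negbTE -> /negbTE ->]; rewrite card_ord.
rewrite !prod_nat_const; set b := #|_|.
have b_le : b <= d.
  by apply/(leq_trans _ card_B)/subset_leq_card/subsetP => y /andP [].
have := succ_expn_le_double b_le; rewrite -/n.
set rest := n ^ #|_|; set X := n ^ b; set Y := (2 * d) ^ b; nia.
Qed.

Lemma card_separating_tests_neq (A B : {set V}) :
    A != B -> #|A| <= d -> #|B| <= d ->
  (2 * d).+1 ^ #|V| <= (4 * d).+2 * #|[set f | separates (zero_set f) A B]|.
Proof.
rewrite eqEsubset negb_and.
case/orP => [/subsetPn [x xA xB] | /subsetPn [x xB xA]] card_A card_B.
  exact: card_separating_tests xA xB card_B.
have -> : [set f | separates (zero_set f) A B]
    = [set f | separates (zero_set f) B A].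
  by apply/setP => f; rewrite !inE /separates eq_sym.
exact: card_separating_tests xB xA card_A.
Qed.

Lemma exists_separating_test (S : {set {set V} * {set V}}) :
    (forall p, p \in S -> [/\ p.1 != p.2, #|p.1| <= d & #|p.2| <= d]) ->
  exists T, #|S| <= (4 * d).+2 * #|[set p in S | separates T p.1 p.2]|.
Proof.
move=> small_pairs.
have [f le_f] : exists f : {ffun V -> 'I_(2 * d).+1},
    #|S| <= (4 * d).+2 * #|[set p in S | separates (zero_set f) p.1 p.2]|.
  apply: exists_ge_average; first by rewrite card_ffun card_ord expn_gt0.
  rewrite -big_distrr /= exchange_sum_card big_distrr /= card_ffun card_ord.
  rewrite -sum_nat_const; apply: leq_sum => p /small_pairs [A_B card_A card_B].
  exact: card_separating_tests_neq.
by exists (zero_set f).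
Qed.

End RandomTests.

Lemma sqr_lt_exp2_up_log n : n * n < 2 ^ (2 * up_log 2 n).+1.
Proof.
have n_le : n <= 2 ^ up_log 2 n := up_logP n (isT : 1 < 2).
set k := up_log 2 n in n_le *; have pos : 0 < 2 ^ k by rewrite expn_gt0.
by rewrite expnS [2 * k]mul2n -addnn expnD; nia.
Qed.

Theorem corollary1 : exists C : nat,
  forall (V : finType) (E : {set {set V}}) (d : nat),
    (forall A, A \in E -> #|A| <= d) ->
    exists Tf : {set {set V}},
      gt_solution E Tf /\ #|Tf| <= C * d * up_log 2 #|E|.
Proof.
exists 18 => V E d small_edges.
have [E_le1 | E_gt1] := leqP #|E| 1.
  exists set0; split=> [A B AE BE | ]; last by rewrite cards0.
  by move/card_le1P/(_ A AE B): E_le1; rewrite BE inE eq_sym => <-.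
have d_gt0 : 0 < d.
  rewrite lt0n; apply: contraTneq E_gt1 => d0.
  rewrite -leqNgt -(cards1 (set0 : {set V})); apply/subset_leq_card/subsetP.
  by move=> A /small_edges; rewrite d0 leqn0 cards_eq0 inE.
set L := up_log 2 #|E|; have L_gt0 : 0 < L by rewrite up_log_gt0 E_gt1.
pose R := [set p : {set V} * {set V} | [&& p.1 \in E, p.2 \in E & p.1 != p.2]].
have card_R : #|R| < 2 ^ (2 * L).+1.
  apply: (@leq_ltn_trans #|setX E E|); last by rewrite cardsX sqr_lt_exp2_up_log.
  by apply/subset_leq_card/subsetP => p; rewrite !inE => /and3P [-> ->].
have good_tests : forall S : {set {set V} * {set V}}, S \subset R ->
    exists T, #|S| <= (4 * d).+2 * #|[set p in S | separates T p.1 p.2]|.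
  move=> S /subsetP S_R; apply: exists_separating_test => p /S_R.
  by rewrite inE => /and3P [p1E p2E ->]; rewrite !small_edges.
have [Tf [card_Tf separated]] := greedy_cover good_tests card_R.
exists Tf; split; last by apply: leq_trans card_Tf _; nia.
by move=> A B AE BE A_B; apply: (separated (A, B)); rewrite inE AE BE A_B.
Qed.
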